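(* Let $r>0$ and let $f:(0,r)\to(0,\infty)$ be a nondecreasing function such that $f(x)<x$ for all $x\in(0,r)$ and, for every $\alpha>1$, $f(x)=O(x^\alpha)$ as $x\to0^+$. For $x_1\in(0,r)$ let $x_{n+1}=x_n-f(x_n)$ and $S=\{x_n:n\ge1\}$. Then $\dim_BS=1$.
   Context: For a bounded set $S\subset\mathbb{R}$ and $\varepsilon>0$, $S_\varepsilon=\{y: \mathrm{dist}(y,S)<\varepsilon\}$ and $|S_\varepsilon|$ is its Lebesgue measure. $\mathcal M^{*s}(S)=\limsup_{\varepsilon\to0}|S_\varepsilon|/\varepsilon^{1-s}$, $\mathcal M_*^{s}(S)=\liminf_{\varepsilon\to0}|S_\varepsilon|/\varepsilon^{1-s}$; $\overline{\dim}_BS=\inf\{s\ge0:\mathcal M^{*s}(S)=0\}$, $\underline{\dim}_BS=\inf\{s\ge0:\mathcal M_*^{s}(S)=0\}$, and $\dim_BS$ is their common value when equal. *)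

From Stdlib Require Import Reals.
Open Scope R_scope.

(* epsilon-neighbourhood S_eps = {y : dist(y,S) < eps}; dist(y,S) < eps iff
   some z in S has |y - z| < eps. *)
Definition nbhd (S : R -> Prop) (eps : R) : R -> Prop :=
  fun y => exists z, S z /\ Rabs (y - z) < eps.

Definition is_glb (E : R -> Prop) (m : R) : Prop :=
  (forall x, E x -> m <= x) /\ (forall b, (forall x, E x -> b <= x) -> b <= m).

(* Lebesgue (outer) measure: infimum of total lengths of countable covers by
   open intervals (a n, b n).  [leb_measure_is A m] : the measure of A is the
   real number m (only meaningful/used for bounded A, where it is finite). *)
Definition cover_length (A : R -> Prop) (L : R) : Prop :=
  exists a b : nat -> R,
    (forall n, a n <= b n) /\
    (forall y, A y -> exists n, a n < y < b n) /\
    infinite_sum (fun n => b n - a n) L.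

Definition leb_measure_is (A : R -> Prop) (m : R) : Prop :=
  is_glb (cover_length A) m.

(* M^{*s}(S) = limsup_{eps->0+} |S_eps| / eps^(1-s) = 0
   (the quantity is nonnegative, so limsup = 0 means it tends to 0). *)
Definition upper_mink_zero (S : R -> Prop) (s : R) : Prop :=
  forall eta, 0 < eta -> exists delta, 0 < delta /\
    forall eps, 0 < eps < delta ->
      forall m, leb_measure_is (nbhd S eps) m -> m / Rpower eps (1 - s) < eta.

(* M_*^{s}(S) = liminf_{eps->0+} |S_eps| / eps^(1-s) = 0 *)
Definition lower_mink_zero (S : R -> Prop) (s : R) : Prop :=
  forall eta, 0 < eta -> forall delta, 0 < delta ->
    exists eps, 0 < eps < delta /\
      forall m, leb_measure_is (nbhd S eps) m -> m / Rpower eps (1 - s) < eta.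

Definition upper_box_dim_is (S : R -> Prop) (d : R) : Prop :=
  is_glb (fun s => 0 <= s /\ upper_mink_zero S s) d.
Definition lower_box_dim_is (S : R -> Prop) (d : R) : Prop :=
  is_glb (fun s => 0 <= s /\ lower_mink_zero S s) d.

Definition box_dim_is (S : R -> Prop) (d : R) : Prop :=
  upper_box_dim_is S d /\ lower_box_dim_is S d.

From Stdlib Require Import Reals Lra Lia Classical List.
Open Scope R_scope.

(* Upper bound.  The orbit lies in (0, r), so |S_eps| <= r + 2 eps stays
   bounded and |S_eps| / eps^(1-s) -> 0 for every s > 1.

   Lower bound.  Fix s < 1 and beta = 1 - s.  The steps f(x_n) decrease to 0;
   let x_j be the last point whose step is still >= 2 eps.  Since
   f(t) = O(t^(2/beta)), a step >= 2 eps forces x_j >= eps^beta, and near 0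
   also f(t) <= t / 2, so x_(j+1) >= eps^beta / 2.  Beyond x_(j+1) the points
   are less than 2 eps apart, so S_eps contains (0, x_(j+1)) and
   |S_eps| >= eps^(1-s) / 2: even the lower content is positive. *)

Definition total_length (l : list (R * R)) : R :=
  fold_right (fun p acc => snd p - fst p + acc) 0 l.

Lemma total_length_app l1 l2 :
  total_length (l1 ++ l2) = total_length l1 + total_length l2.
Proof. induction l1 as [|p l1 IH]; simpl; [lra|]. rewrite IH; lra. Qed.

Lemma total_length_nonneg l :
  (forall p, In p l -> fst p <= snd p) -> 0 <= total_length l.
Proof.
  induction l as [|p l IH]; simpl; intros Hle; [lra|].
  assert (Hp := Hle p (or_introl eq_refl)).
  assert (0 <= total_length l) by (apply IH; auto). lra.
Qed.

(* Finitely many open intervals covering [c, d] have total length at least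
   d - c: the interval containing c reaches past c, and the remaining ones
   cover [its right end, d]. *)
Lemma finite_cover_length : forall n (l : list (R * R)), length l = n ->
  (forall p, In p l -> fst p <= snd p) -> forall c d, c <= d ->
  (forall y, c <= y <= d -> exists p, In p l /\ fst p < y < snd p) ->
  d - c <= total_length l.
Proof.
  induction n as [|n IH]; intros l Hlen Hle c d Hcd Hcov.
  - destruct l; [|discriminate]. destruct (Hcov c) as [p [[] _]]. lra.
  - destruct (Hcov c) as [p [Hp Hpc]]; [lra|].
    destruct (in_split _ _ Hp) as [l1 [l2 ->]].
    set (rest := l1 ++ l2).
    assert (Hrest : forall q, In q rest -> In q (l1 ++ p :: l2)).
    { intros q Hq. apply in_or_app. destruct (in_app_or _ _ _ Hq); simpl; auto. }
    assert (Hsplit : total_length (l1 ++ p :: l2) = (snd p - fst p) + total_length rest).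
    { unfold rest. rewrite !total_length_app. simpl. lra. }
    assert (Hrest_nn : 0 <= total_length rest)
      by (apply total_length_nonneg; intros q Hq; apply Hle, Hrest, Hq).
    rewrite Hsplit. destruct (Rle_or_lt (snd p) d) as [Hpd|Hpd]; [|lra].
    assert (d - snd p <= total_length rest); [|lra].
    apply (IH rest); [unfold rest; rewrite length_app in *; simpl in Hlen; lia
                     | intros q Hq; apply Hle, Hrest, Hq | lra |].
    intros y Hy. destruct (Hcov y) as [q [Hq Hqy]]; [lra|].
    exists q. split; [|auto].
    destruct (in_app_or _ _ _ Hq) as [Hq1|[<-|Hq2]]; [apply in_or_app; auto|lra|].
    apply in_or_app; auto.
Qed.

(* Heine-Borel for a segment and a sequence of open intervals: the supremum
   of the points t such that [c, t] is finitely covered cannot stop before d. *)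
Lemma finite_subcover (a b : nat -> R) c d : c <= d ->
  (forall y, c <= y <= d -> exists n, a n < y < b n) ->
  exists M, forall y, c <= y <= d -> exists n, (n < M)%nat /\ a n < y < b n.
Proof.
  intros Hcd Hcov.
  set (E := fun t => c <= t <= d /\ exists M, forall y, c <= y <= t ->
                exists n, (n < M)%nat /\ a n < y < b n).
  assert (Ec : E c).
  { split; [lra|]. destruct (Hcov c) as [n0 Hn0]; [lra|]. exists (S n0).
    intros y Hy. exists n0. split; [lia|]. replace y with c by lra. auto. }
  assert (Hbound : bound E) by (exists d; intros t [Ht _]; lra).
  destruct (completeness E Hbound (ex_intro _ c Ec)) as [s [Hs_ub Hs_least]].
  assert (Hcs : c <= s) by (apply Hs_ub; auto).
  assert (Hsd : s <= d) by (apply Hs_least; intros t [Ht _]; lra).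
  destruct (Hcov s) as [k Hk]; [lra|].
  assert (Hreach : exists t, E t /\ a k < t).
  { apply NNPP; intro Hn. assert (s <= a k); [|lra].
    apply Hs_least. intros t Et. apply Rnot_lt_le. intro Hlt. apply Hn. eauto. }
  destruct Hreach as [t [[Ht [M HM]] Hkt]].
  assert (Hextend : forall u, c <= u -> u <= d -> u < b k -> E u).
  { intros u Hcu Hud Hub. split; [lra|]. exists (Nat.max M (S k)).
    intros y Hy. destruct (Rle_or_lt y t) as [Hyt|Hyt].
    - destruct (HM y) as [n [Hn Hny]]; [lra|]. exists n. split; [lia|auto].
    - exists k. split; [lia|lra]. }
  destruct (Rle_or_lt d ((s + b k) / 2)) as [Hd|Hd].
  - apply (Hextend d); lra.
  - assert ((s + b k) / 2 <= s); [apply Hs_ub, Hextend|]; lra.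
Qed.

Lemma total_length_seq (a b : nat -> R) M :
  total_length (map (fun n => (a n, b n)) (seq 0 M)) + (b M - a M) =
  sum_f_R0 (fun n => b n - a n) M.
Proof.
  induction M as [|M IH]; [simpl; lra|]. cbn [sum_f_R0]. rewrite <- IH.
  rewrite seq_S, map_app, total_length_app. simpl. lra.
Qed.

Lemma partial_length_le (a b : nat -> R) L :
  (forall n, a n <= b n) -> infinite_sum (fun n => b n - a n) L ->
  forall M, sum_f_R0 (fun n => b n - a n) M <= L.
Proof.
  intros Hab Hsum. apply growing_ineq; [|exact Hsum].
  intro n. simpl. specialize (Hab (S n)). lra.
Qed.

Lemma cover_length_nonneg A L : cover_length A L -> 0 <= L.
Proof.
  intros [a [b [Hab [_ Hsum]]]].
  assert (H0 := partial_length_le a b L Hab Hsum O). simpl in H0.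
  specialize (Hab O). lra.
Qed.

Lemma one_interval_cover A lo hi : lo <= hi ->
  (forall y, A y -> lo < y < hi) -> cover_length A (hi - lo).
Proof.
  intros Hlh HA.
  exists (fun n => match n with O => lo | _ => 0 end),
         (fun n => match n with O => hi | _ => 0 end).
  split; [intros [|n]; lra|]. split; [intros y Hy; exists O; auto|].
  intros e He. exists O. intros n _.
  replace (sum_f_R0 _ n) with (hi - lo).
  - unfold Rdist. rewrite Rminus_diag, Rabs_R0. lra.
  - induction n as [|n IH]; simpl; auto. rewrite <- IH. lra.
Qed.

(* Every cover of a set containing (0, L) has length at least L: after
   shrinking to [del, L - del], a finite subcover already has length
   L - 2 del. *)
Lemma cover_length_ge A L Lc :
  (forall y, 0 < y < L -> A y) -> cover_length A Lc -> L <= Lc.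
Proof.
  intros HA Hc. destruct (Rle_or_lt L 0) as [HL|HL].
  { assert (0 <= Lc) by (apply (cover_length_nonneg A), Hc). lra. }
  destruct Hc as [a [b [Hab [Hcov Hsum]]]].
  apply Rle_plus_epsilon. intros eps Heps.
  set (del := Rmin (eps / 2) (L / 4)).
  assert (Hdel1 : del <= eps / 2) by apply Rmin_l.
  assert (Hdel2 : del <= L / 4) by apply Rmin_r.
  assert (Hdel : 0 < del) by (apply Rmin_glb_lt; lra).
  destruct (finite_subcover a b del (L - del)) as [M HM]; [lra| |].
  { intros y Hy. apply Hcov, HA. lra. }
  assert (Hfin : (L - del) - del <= total_length (map (fun n => (a n, b n)) (seq 0 M))).
  { apply (finite_cover_length _ _ eq_refl); [|lra|].
    - intros p Hp. apply in_map_iff in Hp. destruct Hp as [n [<- _]]. simpl; auto.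
    - intros y Hy. destruct (HM y Hy) as [n [Hn Hny]].
      exists (a n, b n). split; [|simpl; auto].
      apply in_map_iff. exists n. split; auto. apply in_seq. lia. }
  assert (Hseq := total_length_seq a b M).
  assert (Hpart := partial_length_le a b Lc Hab Hsum M).
  specialize (Hab M). lra.
Qed.

(* A set of reals that is nonempty and bounded below has a greatest lower
   bound (completeness applied to the set of opposites). *)
Lemma glb_exists (E : R -> Prop) lb :
  (exists t, E t) -> (forall t, E t -> lb <= t) -> exists m, is_glb E m.
Proof.
  intros [t0 Et0] Hlb.
  set (F := fun u => E (- u)).
  assert (Hbound : bound F) by (exists (- lb); intros u Fu; specialize (Hlb _ Fu); lra).
  assert (HF : exists u, F u) by (exists (- t0); unfold F; rewrite Ropp_involutive; exact Et0).
  destruct (completeness F Hbound HF) as [s [Hs_ub Hs_least]].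
  exists (- s). split.
  - intros t Et.
    assert (Ft : F (- t)) by (unfold F; rewrite Ropp_involutive; exact Et).
    specialize (Hs_ub _ Ft). lra.
  - intros c Hc. assert (s <= - c); [|lra].
    apply Hs_least. intros u Fu. specialize (Hc _ Fu). lra.
Qed.

Lemma measure_exists A lo hi : lo <= hi ->
  (forall y, A y -> lo < y < hi) -> exists m, leb_measure_is A m.
Proof.
  intros Hlh HA. apply (glb_exists _ 0).
  - exists (hi - lo). apply one_interval_cover; auto.
  - apply cover_length_nonneg.
Qed.

Lemma measure_le A lo hi m : lo <= hi ->
  (forall y, A y -> lo < y < hi) -> leb_measure_is A m -> m <= hi - lo.
Proof. intros Hlh HA [Hm _]. apply Hm, one_interval_cover; auto. Qed.

Lemma measure_ge A L m :
  (forall y, 0 < y < L -> A y) -> leb_measure_is A m -> L <= m.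
Proof. intros HA [_ Hm]. apply Hm. intros Lc. apply cover_length_ge, HA. Qed.

Lemma Rpower_pos a b : 0 < Rpower a b.
Proof. apply exp_pos. Qed.

Lemma Rpower_antitone_exponent t a b :
  0 < t < 1 -> b <= a -> Rpower t a <= Rpower t b.
Proof.
  intros Ht Hba. unfold Rpower.
  assert (ln t < 0) by (rewrite <- ln_1; apply ln_increasing; lra).
  destruct (Req_dec a b) as [->|Hne]; [lra|].
  apply Rlt_le, exp_increasing. nra.
Qed.

Lemma nbhd_bounded S lo hi eps :
  (forall y, S y -> lo < y < hi) -> forall y, nbhd S eps y -> lo - eps < y < hi + eps.
Proof.
  intros HS y [z [Sz Hz]]. specialize (HS z Sz). apply Rabs_def2 in Hz. lra.
Qed.

(* A bounded set has zero s-dimensional upper Minkowski content for every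
   s > 1, since |S_eps| stays bounded while eps^(1-s) blows up. *)
Lemma upper_mink_zero_above_one S lo hi : lo <= hi ->
  (forall y, S y -> lo < y < hi) -> forall s, 1 < s -> upper_mink_zero S s.
Proof.
  intros Hlh HS s Hs eta Heta.
  set (K := hi - lo + 2).
  set (d0 := Rpower (eta / K) (/ (s - 1))).
  assert (Hd0 : 0 < d0) by apply Rpower_pos.
  exists (Rmin 1 d0). split; [apply Rmin_glb_lt; lra|].
  intros eps [Heps Hepsd] m Hm.
  assert (Heps1 : eps < 1) by (assert (Rmin 1 d0 <= 1) by apply Rmin_l; lra).
  assert (Hepsd0 : eps < d0) by (assert (Rmin 1 d0 <= d0) by apply Rmin_r; lra).
  assert (HmK : m <= K).
  { assert (m <= (hi + eps) - (lo - eps)); [|unfold K; lra].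
    apply (measure_le (nbhd S eps)); [lra|apply nbhd_bounded, HS|exact Hm]. }
  assert (Hscale : Rpower eps (s - 1) < eta / K).
  { replace (eta / K) with (Rpower d0 (s - 1)).
    - apply Rlt_Rpower_l; lra.
    - unfold d0. rewrite Rpower_mult, Rinv_l by lra. apply Rpower_1.
      unfold K. apply Rdiv_lt_0_compat; lra. }
  assert (0 < Rpower eps (s - 1)) by apply Rpower_pos.
  unfold Rdiv. rewrite <- Rpower_Ropp. replace (- (1 - s)) with (s - 1) by ring.
  apply Rle_lt_trans with (K * Rpower eps (s - 1)); [apply Rmult_le_compat_r; lra|].
  apply Rlt_le_trans with (K * (eta / K)); [apply Rmult_lt_compat_l; [unfold K; lra|exact Hscale]|].
  right. field. unfold K. lra.
Qed.

Lemma upper_mink_zero_lower S s : upper_mink_zero S s -> lower_mink_zero S s.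
Proof.
  intros Hup eta Heta delta Hdelta.
  destruct (Hup eta Heta) as [d [Hd Hall]].
  assert (Rmin delta d <= delta) by apply Rmin_l.
  assert (Rmin delta d <= d) by apply Rmin_r.
  assert (0 < Rmin delta d) by (apply Rmin_glb_lt; lra).
  exists (Rmin delta d / 2). split; [lra|]. apply Hall. lra.
Qed.

Lemma glb_threshold_one (P : R -> Prop) :
  (forall s, 1 < s -> P s) -> (forall s, 0 <= s < 1 -> ~ P s) ->
  is_glb (fun s => 0 <= s /\ P s) 1.
Proof.
  intros Habove Hbelow. split.
  - intros s [Hs HP]. apply Rnot_lt_le. intro Hlt. apply (Hbelow s); auto.
  - intros c Hc. apply Rnot_lt_le. intro Hlt.
    assert (c <= (1 + c) / 2) by (apply Hc; split; [lra|apply Habove; lra]). lra.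
Qed.

Lemma first_crossing (P : nat -> Prop) n : ~ P O -> P n -> exists j, ~ P j /\ P (S j).
Proof.
  intros H0. induction n as [|n IH]; intros Hn; [contradiction|].
  destruct (classic (P n)) as [Hp|Hp]; [apply IH; auto|eauto].
Qed.

Lemma no_uniform_decrease (u : nat -> R) c : 0 < c -> (forall n, 0 < u n) ->
  ~ (forall n, u (S n) <= u n - c).
Proof.
  intros Hc Hu Hdrop.
  assert (Hlin : forall n, u n <= u O - INR n * c).
  { induction n as [|n IH]; [simpl; lra|]. rewrite S_INR. specialize (Hdrop n). lra. }
  destruct (INR_unbounded (u O / c)) as [n Hn].
  specialize (Hlin n). specialize (Hu n).
  assert (u O < INR n * c).
  { apply (Rmult_lt_compat_r c) in Hn; auto. unfold Rdiv in Hn.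
    rewrite Rmult_assoc, Rinv_l in Hn; lra. }
  lra.
Qed.

Definition orbit (x : nat -> R) : R -> Prop := fun y => exists n, y = x n.

Section Orbit.

Variables (r : R) (f : R -> R) (x : nat -> R).
Hypothesis hpos : forall t, 0 < t < r -> 0 < f t.
Hypothesis hmono : forall s t, 0 < s < r -> 0 < t < r -> s <= t -> f s <= f t.
Hypothesis hlt : forall t, 0 < t < r -> f t < t.
Hypothesis hx1 : 0 < x O < r.
Hypothesis hrec : forall n, x (S n) = x n - f (x n).

Lemma orbit_in_domain n : 0 < x n < r.
Proof.
  induction n as [|n IH]; auto. rewrite hrec.
  specialize (hlt _ IH). specialize (hpos _ IH). lra.
Qed.

Lemma orbit_antitone m n : (m <= n)%nat -> x n <= x m.
Proof.
  induction 1 as [|n _ IH]; [lra|]. rewrite hrec.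
  specialize (hpos _ (orbit_in_domain n)). lra.
Qed.

Lemma steps_antitone m n : (m <= n)%nat -> f (x n) <= f (x m).
Proof.
  intros Hmn. apply hmono; [apply orbit_in_domain..|]. apply orbit_antitone, Hmn.
Qed.

(* x_n -> 0: otherwise x_n >= y > 0 forever and every step is at least f(y). *)
Lemma orbit_tends_to_zero y : 0 < y -> exists n, x n < y.
Proof.
  intros Hy. destruct (Rle_or_lt r y) as [Hry|Hry].
  { exists O. lra. }
  apply NNPP. intro Hnone.
  apply (no_uniform_decrease x (f y)); [apply hpos; lra|apply orbit_in_domain|].
  intro n. rewrite hrec.
  assert (Hyn : y <= x n) by (apply Rnot_lt_le; intro; apply Hnone; eauto).
  assert (f y <= f (x n)) by (apply hmono; [lra|apply orbit_in_domain|exact Hyn]).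
  lra.
Qed.

(* Once the steps are shorter than 2 eps, the eps-neighbourhood of the orbit
   fills the whole interval (0, x_N): every y there lies between two
   consecutive points x_(k+1) < y <= x_k at distance < 2 eps. *)
Lemma nbhd_fills_tail eps N : 0 < eps -> f (x N) < 2 * eps ->
  forall y, 0 < y < x N -> nbhd (orbit x) eps y.
Proof.
  intros Heps HN y Hy.
  destruct (orbit_tends_to_zero y) as [n1 Hn1]; [lra|].
  destruct (first_crossing (fun n => x (N + n)%nat < y) n1) as [j [Hj1 Hj2]].
  { rewrite Nat.add_0_r. lra. }
  { assert (x (N + n1)%nat <= x n1) by (apply orbit_antitone; lia). simpl. lra. }
  simpl in Hj1, Hj2. apply Rnot_lt_le in Hj1.
  rewrite Nat.add_succ_r, hrec in Hj2.
  assert (f (x (N + j)%nat) <= f (x N)) by (apply steps_antitone; lia).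
  destruct (Rlt_or_le (x (N + j)%nat - y) eps) as [Hclose|Hfar].
  - exists (x (N + j)%nat). split; [eexists; eauto|]. apply Rabs_def1; lra.
  - exists (x (S (N + j))). split; [eexists; eauto|]. rewrite hrec. apply Rabs_def1; lra.
Qed.

Hypothesis hbig : forall alpha, 1 < alpha -> exists C delta, 0 < delta /\
  forall t, 0 < t < r -> t < delta -> Rabs (f t) <= C * Rpower t alpha.

(* Flatness of f at 0, used with alpha = 2 / beta: near 0 we have
   f(t) <= t / 2, and f(t) < eps as soon as t < eps^beta. *)
Lemma flat_near_zero beta : 0 < beta <= 1 -> exists d, 0 < d <= r /\
  forall t, 0 < t < d -> f t <= t / 2 /\
    forall eps, 0 < eps < d -> t < Rpower eps beta -> f t < eps.
Proof.
  intros Hbeta. set (alpha := 2 / beta).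
  assert (Halpha : 2 <= alpha).
  { unfold alpha. apply (Rmult_le_reg_r beta); [lra|].
    unfold Rdiv. rewrite Rmult_assoc, Rinv_l by lra. nra. }
  destruct (hbig alpha ltac:(lra)) as [C0 [d0 [Hd0 HC0]]].
  set (C := Rmax 1 C0).
  assert (HC1 : 1 <= C) by apply Rmax_l.
  assert (HC : forall t, 0 < t < r -> t < d0 -> f t <= C * Rpower t alpha).
  { intros t Ht Htd. specialize (HC0 t Ht Htd).
    rewrite Rabs_pos_eq in HC0 by (apply Rlt_le, hpos, Ht).
    assert (C0 <= C) by apply Rmax_r.
    assert (0 < Rpower t alpha) by apply Rpower_pos.
    assert (C0 * Rpower t alpha <= C * Rpower t alpha) by (apply Rmult_le_compat_r; lra).
    lra. }
  assert (HiC : 0 < / (2 * C)) by (apply Rinv_0_lt_compat; lra).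
  set (d := Rmin (Rmin d0 r) (Rmin 1 (/ (2 * C)))).
  assert (Hd0' : d <= d0) by (unfold d; eapply Rle_trans; apply Rmin_l).
  assert (Hdr : d <= r) by (unfold d; eapply Rle_trans; [apply Rmin_l|apply Rmin_r]).
  assert (Hd1 : d <= 1) by (unfold d; eapply Rle_trans; [apply Rmin_r|apply Rmin_l]).
  assert (HdC : d <= / (2 * C)) by (unfold d; eapply Rle_trans; apply Rmin_r).
  assert (Hdpos : 0 < d) by (unfold d; repeat apply Rmin_glb_lt; lra).
  exists d. split; [lra|]. intros t Ht.
  assert (Hft : f t <= C * Rpower t alpha) by (apply HC; lra).
  assert (HCt : C * t <= / 2).
  { assert (C * t <= C * / (2 * C)) by (apply Rmult_le_compat_l; lra).
    replace (C * / (2 * C)) with (/ 2) in * by (field; lra). lra. }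
  split.
  - assert (Rpower t alpha <= t ^ 2).
    { rewrite <- (Rpower_pow 2 t) by lra. apply Rpower_antitone_exponent; simpl; lra. }
    assert (C * Rpower t alpha <= C * t ^ 2) by (apply Rmult_le_compat_l; lra).
    simpl in *. nra.
  - intros eps Heps Htb.
    assert (Hpow : Rpower t alpha < eps ^ 2).
    { rewrite <- (Rpower_pow 2 eps) by lra.
      replace (INR 2) with (beta * alpha) by (unfold alpha; simpl; field; lra).
      rewrite <- Rpower_mult. apply Rlt_Rpower_l; lra. }
    assert (C * Rpower t alpha < C * eps ^ 2) by (apply Rmult_lt_compat_l; lra).
    assert (C * eps <= / 2).
    { assert (C * eps <= C * / (2 * C)) by (apply Rmult_le_compat_l; lra).
      replace (C * / (2 * C)) with (/ 2) in * by (field; lra). lra. }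
    simpl in *. nra.
Qed.

(* For small eps, the last point of the orbit before the steps drop below
   2 eps is still at height >= eps^beta / 2: the step f(x_j) >= 2 eps forces
   x_j >= eps^beta, and the next step at most halves x_j. *)
Lemma short_step_above_scale beta : 0 < beta <= 1 -> exists delta, 0 < delta /\
  forall eps, 0 < eps < delta ->
    exists n, f (x n) < 2 * eps /\ Rpower eps beta / 2 <= x n.
Proof.
  intros Hbeta. destruct (flat_near_zero beta Hbeta) as [d [Hd Hflat]].
  destruct (orbit_tends_to_zero d) as [K HK]; [lra|].
  assert (HxK := orbit_in_domain K).
  assert (HfK : 0 < f (x K) < x K) by (split; [apply hpos|apply hlt]; exact HxK).
  exists (f (x K) / 2). split; [lra|]. intros eps Heps.
  destruct (orbit_tends_to_zero (2 * eps)) as [n0 Hn0]; [lra|].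
  destruct (first_crossing (fun i => f (x (K + i)%nat) < 2 * eps) n0) as [j [Hj1 Hj2]].
  { rewrite Nat.add_0_r. lra. }
  { assert (f (x (K + n0)%nat) <= f (x n0)) by (apply steps_antitone; lia).
    assert (f (x n0) < x n0) by (apply hlt, orbit_in_domain). lra. }
  apply Rnot_lt_le in Hj1. rewrite Nat.add_succ_r in Hj2.
  set (t := x (K + j)%nat) in *.
  assert (Ht : 0 < t < d).
  { assert (t <= x K) by (apply orbit_antitone; lia).
    assert (0 < t) by apply orbit_in_domain. lra. }
  destruct (Hflat t Ht) as [Hhalf Hsmall].
  assert (Hscale : Rpower eps beta <= t).
  { apply Rnot_lt_le. intro Hlt. assert (f t < eps) by (apply Hsmall; lra). lra. }
  exists (S (K + j)). split; [exact Hj2|].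
  rewrite hrec. fold t. lra.
Qed.

(* Hence the lower Minkowski content of the orbit is infinite below dimension
   1: |S_eps| >= x_n >= eps^(1-s) / 2 for all small eps. *)
Lemma orbit_lower_mink_nonzero s : 0 <= s < 1 -> ~ lower_mink_zero (orbit x) s.
Proof.
  intros Hs Hlow.
  destruct (short_step_above_scale (1 - s)) as [delta [Hdelta Hstep]]; [lra|].
  destruct (Hlow (1 / 2) ltac:(lra) delta Hdelta) as [eps [Heps Hsmall]].
  assert (Hbounded : forall y, orbit x y -> 0 < y < r).
  { intros y [n ->]. apply orbit_in_domain. }
  destruct (measure_exists (nbhd (orbit x) eps) (0 - eps) (r + eps))
    as [m Hm]; [lra|apply nbhd_bounded, Hbounded|].
  specialize (Hsmall m Hm).
  destruct (Hstep eps Heps) as [n [Hfn Hxn]].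
  assert (Hmx : x n <= m) by (apply (measure_ge (nbhd (orbit x) eps)); [apply nbhd_fills_tail; lra|exact Hm]).
  assert (Hp : 0 < Rpower eps (1 - s)) by apply Rpower_pos.
  assert (1 / 2 <= m / Rpower eps (1 - s)); [|lra].
  apply (Rmult_le_reg_r (Rpower eps (1 - s))); [lra|].
  replace (m / Rpower eps (1 - s) * Rpower eps (1 - s)) with m by (field; lra). lra.
Qed.

End Orbit.

Theorem theorem6 (r : R) (f : R -> R) (x : nat -> R)
  (hr : 0 < r)
  (hpos : forall t, 0 < t < r -> 0 < f t)
  (hmono : forall s t, 0 < s < r -> 0 < t < r -> s <= t -> f s <= f t)
  (hlt : forall t, 0 < t < r -> f t < t)
  (hbig : forall alpha, 1 < alpha -> exists C delta, 0 < delta /\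
            forall t, 0 < t < r -> t < delta -> Rabs (f t) <= C * Rpower t alpha)
  (hx1 : 0 < x O < r)
  (hrec : forall n, x (S n) = x n - f (x n)) :
  box_dim_is (fun y => exists n, y = x n) 1.
Proof.
  change (box_dim_is (orbit x) 1).
  assert (Hupper : forall s, 1 < s -> upper_mink_zero (orbit x) s).
  { apply (upper_mink_zero_above_one _ 0 r); [lra|].
    intros y [n ->]. apply (orbit_in_domain r f); auto. }
  assert (Hlower : forall s, 0 <= s < 1 -> ~ lower_mink_zero (orbit x) s).
  { intros s Hs. apply (orbit_lower_mink_nonzero r f); auto. }
  split; apply glb_threshold_one.
  - exact Hupper.
  - intros s Hs Hup. apply (Hlower s Hs), upper_mink_zero_lower, Hup.
  - intros s Hs. apply upper_mink_zero_lower, Hupper, Hs.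
  - exact Hlower.
Qed.
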